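(* Let $0<\beta\le\alpha$, let $\hat A=(\hat a[i_1],\dots,\hat a[i_m])$ be an $\alpha$-RS, and let $\theta>0$ satisfy $\hat a[i_1]\le\theta$. Let $i_v$ be the largest index in $\{i_1,\dots,i_m\}$ with $\hat a[i_v]\le\theta$. For an integer $\kappa$ let $H(\kappa)$ denote the largest index $i_u$ with $\hat a[i_u]\le(1+\beta)^{\kappa}$, when such an index exists. Then either $i_v=H(\lceil\log_{1+\beta}\theta\rceil)$ or $i_v=H(\lfloor\log_{1+\beta}\theta\rfloor)$ (the latter being defined in that case).
   Context: An $\alpha$-representative sequence ($\alpha$-RS), for $\alpha\ge 0$, is a finite sequence $\hat A=(\hat a[i_1],\hat a[i_2],\dots,\hat a[i_m])$ of real numbers with associated integer indices $0\le i_1<i_2<\dots<i_m$ such that $\hat a[i_1]\ge 0$ and $\hat a[i_{v+1}]\ge(1+\alpha)\hat a[i_v]$ for all $v\in[1,m-1]$. *)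

From Stdlib Require Import Reals Lra Lia ZArith.
Open Scope R_scope.

(* floor and ceiling of a real number. [up x] is the unique integer with
   x < up x <= x + 1, so [up x - 1] is the floor. *)
Definition floorZ (x : R) : Z := (up x - 1)%Z.
Definition ceilZ (x : R) : Z := (- floorZ (- x))%Z.

Definition logb (b x : R) : R := ln x / ln b.

(* A finite sequence with m entries: positions v = 0..m-1 (the paper's
   v = 1..m), integer indices idx v, and values a (idx v) = \hat a[i_{v+1}]. *)
Definition is_alpha_RS (alpha : R) (m : nat) (idx : nat -> nat) (a : nat -> R)
  : Prop :=
  (1 <= m)%nat /\
  (forall v, (v + 1 < m)%nat -> (idx v < idx (v + 1))%nat) /\
  0 <= a (idx 0%nat) /\
  (forall v, (v + 1 < m)%nat -> a (idx (v + 1)%nat) >= (1 + alpha) * a (idx v)).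

Definition largest_le (m : nat) (idx : nat -> nat) (a : nat -> R) (t : R)
  (j : nat) : Prop :=
  exists u, (u < m)%nat /\ j = idx u /\ a (idx u) <= t /\
    (forall w, (w < m)%nat -> a (idx w) <= t -> (idx w <= j)%nat).

Definition H_is (beta : R) (m : nat) (idx : nat -> nat) (a : nat -> R)
  (kappa : Z) (j : nat) : Prop :=
  largest_le m idx a (powerRZ (1 + beta) kappa) j.

(* Write b = 1 + beta, f = floor (log_b theta) and c = ceil (log_b theta), so
   that b^f <= theta <= b^c <= b^(f+1).  If \hat a[i_v] <= b^f, then i_v is
   still the largest index below the smaller threshold b^f, so i_v = H(f).
   Otherwise every later entry is at least (1+alpha) \hat a[i_v]
   > b * b^f >= b^c, so raising the threshold from theta to b^c admits no new
   index and i_v = H(c). *)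
From Stdlib Require Import Reals ZArith Lra Lia.
Open Scope R_scope.

Lemma floorZ_spec (x : R) : IZR (floorZ x) <= x < IZR (floorZ x) + 1.
Proof.
  unfold floorZ; destruct (archimed x).
  rewrite minus_IZR; simpl; lra.
Qed.

Lemma ceilZ_spec (x : R) : x <= IZR (ceilZ x) < x + 1.
Proof.
  unfold ceilZ; pose proof (floorZ_spec (- x)).
  rewrite opp_IZR; lra.
Qed.

Lemma ceilZ_le_floorZ_succ (x : R) : (ceilZ x <= floorZ x + 1)%Z.
Proof.
  pose proof (floorZ_spec x); pose proof (ceilZ_spec x).
  assert (IZR (ceilZ x) < IZR (floorZ x + 2)) by (rewrite plus_IZR; lra).
  apply lt_IZR in H1; lia.
Qed.

Lemma Rpower_logb (b x : R) : 1 < b -> 0 < x -> Rpower b (logb b x) = x.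
Proof.
  intros Hb Hx.
  assert (0 < ln b) by (rewrite <- ln_1; apply ln_increasing; lra).
  unfold Rpower, logb.
  replace (ln x / ln b * ln b) with (ln x) by (field; lra).
  now apply exp_ln.
Qed.

Lemma powerRZ_le_Rpower (b y : R) (z : Z) :
  1 < b -> IZR z <= y -> powerRZ b z <= Rpower b y.
Proof.
  intros Hb Hz; rewrite powerRZ_Rpower by lra; apply Rle_Rpower; lra.
Qed.

Lemma Rpower_le_powerRZ (b y : R) (z : Z) :
  1 < b -> y <= IZR z -> Rpower b y <= powerRZ b z.
Proof.
  intros Hb Hz; rewrite powerRZ_Rpower by lra; apply Rle_Rpower; lra.
Qed.

Lemma powerRZ_le_exponent (b : R) (n p : Z) :
  1 < b -> (n <= p)%Z -> powerRZ b n <= powerRZ b p.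
Proof.
  intros Hb Hnp; rewrite (powerRZ_Rpower b n) by lra.
  apply Rpower_le_powerRZ; [lra | now apply IZR_le].
Qed.

Lemma powerRZ_floorZ_logb_le (b x : R) :
  1 < b -> 0 < x -> powerRZ b (floorZ (logb b x)) <= x.
Proof.
  intros Hb Hx; rewrite <- (Rpower_logb b x) at 2 by lra.
  apply powerRZ_le_Rpower; [lra | apply floorZ_spec].
Qed.

Lemma le_powerRZ_ceilZ_logb (b x : R) :
  1 < b -> 0 < x -> x <= powerRZ b (ceilZ (logb b x)).
Proof.
  intros Hb Hx; rewrite <- (Rpower_logb b x) at 1 by lra.
  apply Rpower_le_powerRZ; [lra | apply ceilZ_spec].
Qed.

Lemma powerRZ_ceilZ_le_succ_floorZ (b y : R) :
  1 < b -> powerRZ b (ceilZ y) <= b * powerRZ b (floorZ y).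
Proof.
  intros Hb.
  replace (b * powerRZ b (floorZ y)) with (powerRZ b (floorZ y + 1))
    by (rewrite powerRZ_add by lra; simpl; ring).
  apply powerRZ_le_exponent; [lra | apply ceilZ_le_floorZ_succ].
Qed.

Lemma largest_le_lower (m : nat) (idx : nat -> nat) (a : nat -> R)
  (t s : R) (j : nat) :
  largest_le m idx a t j -> s <= t -> a j <= s -> largest_le m idx a s j.
Proof.
  intros [u [Hu [-> [_ Hmax]]]] Hst Hs.
  exists u; repeat split; auto.
  intros w Hw Haw; apply Hmax; auto; lra.
Qed.

Section AlphaRS.

Variables (alpha : R) (m : nat) (idx : nat -> nat) (a : nat -> R).
Hypothesis alpha_ge0 : 0 <= alpha.
Hypothesis RS : is_alpha_RS alpha m idx a.

Lemma rs_idx_le (v w : nat) : (v <= w < m)%nat -> (idx v <= idx w)%nat.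
Proof.
  destruct RS as [_ [Hidx _]].
  induction w as [|w IH]; intros Hvw; [replace v with 0%nat by lia; lia|].
  destruct (Nat.eq_dec v (S w)) as [->|Hne]; [lia|].
  specialize (Hidx w ltac:(lia)); rewrite Nat.add_1_r in Hidx.
  specialize (IH ltac:(lia)); lia.
Qed.

Lemma rs_value_ge0 (w : nat) : (w < m)%nat -> 0 <= a (idx w).
Proof.
  destruct RS as [_ [_ [H0 Hgrow]]].
  induction w as [|w IH]; intros Hw; [assumption|].
  specialize (Hgrow w ltac:(lia)); rewrite Nat.add_1_r in Hgrow.
  specialize (IH ltac:(lia)); nra.
Qed.

Lemma rs_value_growth (v w : nat) :
  (v < w < m)%nat -> (1 + alpha) * a (idx v) <= a (idx w).
Proof.
  destruct RS as [_ [_ [_ Hgrow]]].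
  induction w as [|w IH]; intros Hvw; [lia|].
  specialize (Hgrow w ltac:(lia)); rewrite Nat.add_1_r in Hgrow.
  destruct (Nat.eq_dec v w) as [->|Hne]; [lra|].
  specialize (IH ltac:(lia)).
  pose proof (rs_value_ge0 w ltac:(lia)); nra.
Qed.

(* No entry lies in [(t, (1 + alpha) a j)], so thresholds in that range
   select the same largest index. *)
Lemma largest_le_upper (t s : R) (j : nat) :
  largest_le m idx a t j -> t <= s -> s < (1 + alpha) * a j ->
  largest_le m idx a s j.
Proof.
  intros [u [Hu [-> [Hau Hmax]]]] Hts Hs.
  exists u; repeat split; auto; [lra|].
  intros w Hw Haw; destruct (le_lt_dec w u) as [Hwu|Huw].
  - now apply rs_idx_le.
  - pose proof (rs_value_growth u w ltac:(lia)); lra.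
Qed.

End AlphaRS.

Theorem lemma3 (alpha beta theta : R) (m : nat) (idx : nat -> nat)
  (a : nat -> R) (iv : nat) :
  0 < beta -> beta <= alpha ->
  is_alpha_RS alpha m idx a ->
  0 < theta -> a (idx 0%nat) <= theta ->
  largest_le m idx a theta iv ->
  H_is beta m idx a (ceilZ (logb (1 + beta) theta)) iv \/
  H_is beta m idx a (floorZ (logb (1 + beta) theta)) iv.
Proof.
  (* [a (idx 0) <= theta] only guarantees that [iv] exists, which [Hiv]
     already asserts. *)
  intros Hbeta Hba RS Htheta _ Hiv; unfold H_is.
  set (b := 1 + beta); set (L := logb b theta).
  assert (Hb : 1 < b) by (unfold b; lra).
  pose proof (powerRZ_floorZ_logb_le b theta Hb Htheta) as Hfloor.
  pose proof (le_powerRZ_ceilZ_logb b theta Hb Htheta) as Hceil.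
  pose proof (powerRZ_ceilZ_le_succ_floorZ b L Hb) as Hsucc.
  destruct (Rle_dec (a iv) (powerRZ b (floorZ L))) as [Hle|Hgt].
  - right; exact (largest_le_lower _ _ _ _ _ _ Hiv Hfloor Hle).
  - left; apply (largest_le_upper alpha) with theta; auto; [lra|].
    destruct Hiv as [u [Hu [-> _]]].
    pose proof (rs_value_ge0 alpha m idx a ltac:(lra) RS u Hu).
    unfold b in *; nra.
Qed.
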